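(* Let $\mathcal{X},\mathcal{Y},\mathcal{U},\mathcal{Z}$ be finite sets, $(X,Y)$ with joint distribution $P_{X,Y}$ on $\mathcal{X}\times\mathcal{Y}$ ($P_X,P_Y$ full support), $f:\mathcal{X}\times\mathcal{Y}\to\mathcal{U}$, $g:\mathcal{Y}\to\mathcal{Z}$, and let $Z^n=(g(Y_t))_{t\le n}$ where $(X^n,Y^n)$ are $n$ i.i.d. copies of $(X,Y)$. Then, as $n\to\infty$, $$H_\chi(G_{[n]})=\inf_{c\in\mathcal{S}_n}H\big(c(X^n,Z^n)\big)+O(\log n).$$
   Context: A probabilistic graph is $(\mathcal{V},\mathcal{E},P_V)$ with a distribution on vertices; a coloring is a map $c$ from $\mathcal{V}$ to a finite set such that adjacent vertices receive different colors; $H_\chi(G)=\inf\{H(c(V)): c\text{ coloring of }G\}$ with $V\sim P_V$. The characteristic graph $G_{[n]}$ has vertex set $\mathcal{X}^n\times\mathcal{Z}^n$ with distribution of $(X^n,Z^n)$, and $(x^n,z^n)$, $(x'^n,z'^n)$ are adjacent iff $z^n=z'^n$ and there is $y^n$ with $g(y_t)=z_t$ for all $t$ such that $P_{X,Y}(x_t,y_t)P_{X,Y}(x'_t,y_t)>0$ for all $t\le n$ and $f(x_t,y_t)\ne f(x'_t,y_t)$ for some $t$. For $z^n\in\mathcal{Z}^n$, $T_{z^n}$ is its type (empirical distribution). $\mathcal{S}_n$ is the set of colorings of $G_{[n]}$ of the form $(x^n,z^n)\mapsto(T_{z^n},\tilde c(x^n,z^n))$ for some map $\tilde c$ from $\mathcal{X}^n\times\mathcal{Z}^n$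 into a finite set. *)

From HB Require Import structures.
From mathcomp Require Import all_boot all_order all_algebra.
From mathcomp Require Import all_classical all_reals.
From mathcomp Require Import exp.
Set Implicit Arguments. Unset Strict Implicit. Unset Printing Implicit Defensive.
Import Order.TTheory GRing.Theory Num.Theory.
Local Open Scope ring_scope.
Local Open Scope classical_set_scope.

Section Defs.
Variable R : realType.

(* Shannon entropy (natural log; 0 ln 0 = 0) of c(V) where V ~ p on a finite
   vertex type V and c takes values in an arbitrary eqType C. *)
Definition pushprob (V : finType) (C : eqType) (p : V -> R) (c : V -> C) (k : C) : R :=
  \sum_(v | c v == k) p v.

Definition entropy (V : finType) (C : eqType) (p : V -> R) (c : V -> C) : R :=
  - \sum_(k <- undup [seq c v | v <- enum V]) pushprob p c k * ln (pushprob p c k).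

Variables (X Y U Z : finType) (P : X -> Y -> R) (f : X -> Y -> U) (g : Y -> Z).

Definition vtx (n : nat) : finType := ({ffun 'I_n -> X} * {ffun 'I_n -> Z})%type.

Definition PXZ (n : nat) (v : vtx n) : R :=
  \sum_(y : {ffun 'I_n -> Y} | [forall t, g (y t) == v.2 t])
     \prod_(t < n) P (v.1 t) (y t).

Definition adj (n : nat) (v w : vtx n) : Prop :=
  v.2 = w.2 /\
  exists y : {ffun 'I_n -> Y},
    (forall t, g (y t) = v.2 t) /\
    (forall t, 0 < P (v.1 t) (y t) * P (w.1 t) (y t)) /\
    (exists t, f (v.1 t) (y t) <> f (w.1 t) (y t)).

Definition is_coloring (n : nat) (C : eqType) (c : vtx n -> C) : Prop :=
  forall v w, adj v w -> c v <> c w.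

(* H_chi(G_[n]); colors taken in nat (any finite color set injects into nat,
   and entropy is invariant under injective relabeling). *)
Definition Hchi (n : nat) : R :=
  inf [set h | exists c : vtx n -> nat, is_coloring c /\ h = entropy (@PXZ n) c].

Definition ztype (n : nat) (z : {ffun 'I_n -> Z}) : {ffun Z -> R} :=
  [ffun a => #|[set t | z t == a]|%:R / n%:R].

Definition infS (n : nat) : R :=
  inf [set h | exists ct : vtx n -> nat,
        is_coloring (fun v : vtx n => (ztype v.2, ct v)) /\
        h = entropy (@PXZ n) (fun v : vtx n => (ztype v.2, ct v))].
End Defs.

From HB Require Import structures.
From mathcomp Require Import all_boot all_order all_algebra.
From mathcomp Require Import all_classical all_reals.
From mathcomp Require Import exp.
From mathcomp Require Import lra zify.
Set Implicit Arguments. Unset Strict Implicit. Unset Printing Implicit Defensive.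
Import Order.TTheory GRing.Theory Num.Theory.
Local Open Scope ring_scope.

(* Restricting to colorings in S_n can only raise the infimum, since relabeling
   colors injectively into nat preserves entropy.  Conversely, pairing any
   coloring c with the type T_{z^n} gives a coloring in S_n, and by Gibbs'
   inequality H(T, c) <= H(c) + ln N, where N <= (n+1)^|Z| bounds the number of
   types.  Hence the two infima differ by at most |Z| ln (n+1) = O(log n). *)

Lemma ln_le_subr1 (R : realType) (y : R) : 0 < y -> ln y <= y - 1.
Proof.
move=> y_gt0; have := @le_ln1Dx R (y - 1).
by rewrite addrCA subrr addr0; apply; lra.
Qed.

Lemma mul_ln_le (R : realType) (x r m : R) : 0 <= x -> 0 < r -> 0 < m ->
  x * ln r <= x * ln m + x * r / m - x.
Proof.
move=> x_ge0 r_gt0 m_gt0.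
have rm_gt0 : 0 < r / m by rewrite divr_gt0.
have -> : x * ln r = x * ln m + x * ln (r / m).
  by rewrite -mulrDr ln_div ?posrE // addrC subrK.
rewrite -addrA lerD2l.
by have := ler_wpM2l x_ge0 (ln_le_subr1 rm_gt0); rewrite mulrBr mulr1 mulrA.
Qed.

Lemma inf_le_inf_add (R : realType) (A B : set R) (d : R) :
  has_lbound B -> (A !=set0)%classic ->
  (forall a, A a -> exists2 b, B b & b <= a + d) -> inf B <= inf A + d.
Proof.
move=> lbB [a0 Aa0] AB; rewrite -lerBlDr; apply: lb_le_inf => [|a Aa].
  by exists a0.
have [b Bb le_ba] := AB a Aa; rewrite lerBlDr.
exact: le_trans (ge_inf lbB Bb) le_ba.
Qed.

Section Entropy.
Variables (R : realType) (V : finType) (p : V -> R).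
Hypothesis p_ge0 : forall v, 0 <= p v.

Lemma sum_partition (C : eqType) (s : seq C) (c : V -> C) (Q : pred V) (F : V -> R) :
  uniq s -> (forall v, c v \in s) ->
  \sum_(k <- s) \sum_(v | Q v && (c v == k)) F v = \sum_(v | Q v) F v.
Proof.
move=> s_uniq c_in_s.
under eq_bigr do rewrite big_mkcond.
rewrite exchange_big [RHS]big_mkcond; apply: eq_bigr => v _ /=.
rewrite (big_rem (c v)) //= eqxx andbT big1_seq ?addr0 // => k /andP[_].
rewrite (mem_rem_uniq _ s_uniq) inE => /andP[k_neq _].
by rewrite eq_sym (negbTE k_neq) andbF.
Qed.

Definition values (C : eqType) (c : V -> C) : seq C := undup [seq c v | v <- enum V].

Lemma mem_values (C : eqType) (c : V -> C) v : c v \in values c.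
Proof. by rewrite mem_undup map_f ?mem_enum. Qed.

Lemma sum_partition_values (C : eqType) (c : V -> C) (Q : pred V) (F : V -> R) :
  \sum_(k <- values c) \sum_(v | Q v && (c v == k)) F v = \sum_(v | Q v) F v.
Proof. exact: sum_partition (undup_uniq _) (@mem_values _ c). Qed.

Lemma entropyE (C : eqType) (c : V -> C) :
  entropy p c = - \sum_v p v * ln (pushprob p c (c v)).
Proof.
rewrite -(sum_partition_values c predT); congr (- _).
apply: eq_bigr => k _; rewrite big_distrl.
by apply: eq_bigr => v /eqP ->.
Qed.

Lemma pushprob_ge (C : eqType) (c : V -> C) v : p v <= pushprob p c (c v).
Proof. by rewrite /pushprob (bigD1 v) //= lerDl sumr_ge0. Qed.

Lemma pushprob_le_sum (C : eqType) (c : V -> C) k : pushprob p c k <= \sum_v p v.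
Proof. by rewrite /pushprob [leRHS](bigID (fun v => c v == k)) lerDl sumr_ge0. Qed.

Lemma entropy_ge0 (C : eqType) (c : V -> C) : \sum_v p v = 1 -> 0 <= entropy p c.
Proof.
move=> p_sum1; rewrite entropyE oppr_ge0 sumr_le0 // => v _.
by rewrite mulr_ge0_le0 // ln_le0 // -p_sum1 pushprob_le_sum.
Qed.

Lemma entropy_inj (C D : eqType) (c : V -> C) (h : C -> D) :
  {in values c &, injective h} -> entropy p (h \o c) = entropy p c.
Proof.
move=> h_inj; rewrite !entropyE; congr (- _); apply: eq_bigr => v _.
by congr (_ * ln _); apply: eq_bigl => w; rewrite /= (inj_in_eq h_inj) ?mem_values.
Qed.

Lemma index_values_inj (C : eqType) (c : V -> C) :
  {in values c &, injective (index^~ (values c))}.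
Proof. by move=> k l k_in l_in /(congr1 (nth k (values c))); rewrite !nth_index. Qed.

Section PairBound.
Variables (A B : eqType) (a : V -> A) (b : V -> B) (sA : seq A).
Hypotheses (sA_uniq : uniq sA) (a_in_sA : forall v, a v \in sA).

Let pab v := pushprob p (fun w => (a w, b w)) (a v, b v).
Let pb v := pushprob p b (b v).

Lemma sum_pushprob_ratio_le :
  \sum_v p v * (pb v / pab v) <= (size sA)%:R * \sum_v p v.
Proof.
rewrite -(sum_partition predT _ sA_uniq a_in_sA).
rewrite -sum1_size natr_sum mulr_suml; apply: ler_sum => i _; rewrite mul1r.
rewrite -(sum_partition_values b predT).
rewrite -(sum_partition_values b (fun v => a v == i) (fun v => p v * (pb v / pab v))).
apply: ler_sum => k _.
set q := pushprob p (fun w => (a w, b w)) (i, k).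
have -> : \sum_(v | (a v == i) && (b v == k)) p v * (pb v / pab v) =
          q * (pushprob p b k / q).
  rewrite big_distrl; apply: eq_big => [v|v /andP[/eqP av /eqP bv]].
    by rewrite xpair_eqE.
  by rewrite /pab /pb av bv.
have [->|q_neq0] := eqVneq q 0; first by rewrite mul0r sumr_ge0.
by rewrite mulrCA divff // mulr1.
Qed.

Lemma entropy_pair_le : (0 < size sA)%N ->
  entropy p (fun v => (a v, b v)) <= entropy p b + (\sum_v p v) * ln (size sA)%:R.
Proof.
move=> sA_gt0; set m : R := (size sA)%:R; have m_gt0 : 0 < m by rewrite ltr0n.
have pointwise v :
    p v * (ln (pb v) - ln (pab v)) <= p v * ln m + p v * (pb v / pab v) / m - p v.
  have [->|pv_neq0] := eqVneq (p v) 0; first by rewrite !mul0r addr0 subr0.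
  have pv_gt0 : 0 < p v by rewrite lt_def pv_neq0 p_ge0.
  have pab_gt0 : 0 < pab v := lt_le_trans pv_gt0 (pushprob_ge _ v).
  have pb_gt0 : 0 < pb v := lt_le_trans pv_gt0 (pushprob_ge _ v).
  by rewrite -ln_div ?posrE // mul_ln_le // divr_gt0.
have sum_le : \sum_v p v * ln (pb v) - \sum_v p v * ln (pab v) <=
    \sum_v (p v * ln m + p v * (pb v / pab v) / m - p v).
  by rewrite -sumrB; apply: ler_sum => v _; rewrite -mulrBr; exact: pointwise.
rewrite sumrB big_split /= -!mulr_suml in sum_le.
have ratio_le : (\sum_v p v * (pb v / pab v)) / m <= \sum_v p v.
  by rewrite ler_pdivrMr // mulrC sum_pushprob_ratio_le.
rewrite !entropyE; move: sum_le ratio_le; rewrite /pab /pb; lra.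
Qed.
End PairBound.
End Entropy.

Section CharacteristicGraph.
Variables (R : realType) (X Y U Z : finType) (P : X -> Y -> R).
Variables (f : X -> Y -> U) (g : Y -> Z) (n : nat).
Hypotheses (P_ge0 : forall x y, 0 <= P x y) (P_sum1 : \sum_x \sum_y P x y = 1).

Local Notation pXZ := (@PXZ R X Y Z P g n).

Lemma PXZ_ge0 (v : vtx X Z n) : 0 <= pXZ v.
Proof. by rewrite sumr_ge0 // => y _; rewrite prodr_ge0. Qed.

Lemma PXZ_sum1 : \sum_v pXZ v = 1.
Proof.
rewrite -(pair_bigA _ (fun x z => PXZ P g (x, z))) /=.
have marginal_z (x : {ffun 'I_n -> X}) : \sum_z PXZ P g (x, z) =
    \sum_(y : {ffun 'I_n -> Y}) \prod_(t < n) P (x t) (y t).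
  rewrite (exchange_big_dep predT) //=; apply: eq_bigr => y _.
  rewrite (eq_bigl (pred1 [ffun t => g (y t)])) ?big_pred1_eq // => z /=.
  apply/forallP/eqP => [z_eq|-> t]; last by rewrite ffunE.
  by apply/ffunP => t; rewrite ffunE (eqP (z_eq t)).
under eq_bigr do rewrite marginal_z -(bigA_distr_bigA (fun t b => P (_ t) b)).
by rewrite -(bigA_distr_bigA (fun t a => \sum_b P a b)) big1.
Qed.

Lemma adj_irrefl (v : vtx X Z n) : ~ adj P f g v v.
Proof. by case=> _ [y [_ [_ [t]]]]; apply. Qed.

Lemma is_coloring_rank : is_coloring P f g (fun v : vtx X Z n => val (enum_rank v)).
Proof.
move=> v w vw /val_inj /enum_rank_inj v_eq_w.
by move: vw; rewrite v_eq_w; apply: adj_irrefl.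
Qed.

Lemma is_coloring_pair (C D : eqType) (d : vtx X Z n -> D) (c : vtx X Z n -> C) :
  is_coloring P f g c -> is_coloring P f g (fun v => (d v, c v)).
Proof. by move=> c_col v w vw [_]; apply: c_col. Qed.

Lemma is_coloring_relabel_nat (C : eqType) (c : vtx X Z n -> C) :
  is_coloring P f g c -> exists2 c' : vtx X Z n -> nat,
    is_coloring P f g c' & entropy pXZ c' = entropy pXZ c.
Proof.
move=> c_col; exists (index^~ (values c) \o c).
  by move=> v w vw /index_values_inj eq_c; apply: c_col vw (eq_c _ _); rewrite mem_values.
by rewrite entropy_inj //; exact: index_values_inj.
Qed.

Definition ztypes : seq {ffun Z -> R} :=
  undup (codom (fun k : {ffun Z -> 'I_n.+1} => [ffun a => (k a : nat)%:R / n%:R])).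

Lemma ztype_in_ztypes (z : {ffun 'I_n -> Z}) : ztype R z \in ztypes.
Proof.
have card_lt a : (#|[set t | z t == a]%classic| < n.+1)%N.
  by rewrite ltnS (leq_trans (max_card _)) ?card_ord.
rewrite mem_undup; apply/codomP; exists [ffun a => Ordinal (card_lt a)].
by apply/ffunP => a; rewrite !ffunE.
Qed.

Lemma size_ztypes_gt0 : (0 < size ztypes)%N.
Proof.
have : [ffun=> 0] \in ztypes.
  rewrite mem_undup; apply/codomP; exists [ffun=> ord0].
  by apply/ffunP => a; rewrite !ffunE mul0r.
by case: ztypes.
Qed.

Lemma size_ztypes_le : (size ztypes <= n.+1 ^ #|Z|)%N.
Proof. by rewrite (leq_trans (size_undup _)) // size_codom card_ffun card_ord. Qed.

Lemma ln_size_ztypes_le :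
  (2 <= n)%N -> ln ((size ztypes)%:R : R) <= (2 * #|Z|)%:R * ln (n%:R : R).
Proof.
move=> n_ge2; have n_gt0 : (0 < n)%N by apply: leq_trans n_ge2.
have size_le : (size ztypes <= n ^ (2 * #|Z|))%N.
  rewrite (leq_trans size_ztypes_le) // expnM.
  by case: #|Z| => [|k] //; rewrite leq_exp2r // -mulnn; nia.
rewrite mulr_natl -lnXn ?ltr0n // ler_ln ?posrE ?exprn_gt0 ?ltr0n ?size_ztypes_gt0 //.
by rewrite -natrX ler_nat size_le.
Qed.

Lemma entropy_PXZ_ge0 (C : eqType) (c : vtx X Z n -> C) : 0 <= entropy pXZ c.
Proof. by have := entropy_ge0 PXZ_ge0 c; apply; apply: PXZ_sum1. Qed.

Lemma Hchi_le_infS : Hchi P f g n <= infS P f g n.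
Proof.
rewrite -[leRHS]addr0; apply: inf_le_inf_add.
- by exists 0 => _ [c [_ ->]]; exact: entropy_PXZ_ge0.
- by exists (entropy pXZ (fun v => (ztype R v.2, val (enum_rank v)))); eexists; split;
    [exact/is_coloring_pair/is_coloring_rank|].
- move=> _ [c [c_col ->]]; have [c' c'_col c'E] := is_coloring_relabel_nat c_col.
  by exists (entropy pXZ c'); [exists c' | rewrite c'E addr0].
Qed.

Lemma infS_le_Hchi : infS P f g n <= Hchi P f g n + ln (size ztypes)%:R.
Proof.
apply: inf_le_inf_add.
- by exists 0 => _ [c [_ ->]]; exact: entropy_PXZ_ge0.
- by exists (entropy pXZ (fun v => val (enum_rank v))); exists (fun v => val (enum_rank v));
    split; [exact: is_coloring_rank|].
- move=> _ [c [c_col ->]]; exists (entropy pXZ (fun v => (ztype R v.2, c v))).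
    by exists c; split; [exact: is_coloring_pair|].
  have := entropy_pair_le PXZ_ge0 c (undup_uniq _) (fun v => ztype_in_ztypes v.2).
  by rewrite PXZ_sum1 mul1r; apply; exact: size_ztypes_gt0.
Qed.
End CharacteristicGraph.

Theorem lemma1 (R : realType) (X Y U Z : finType) (P : X -> Y -> R)
    (f : X -> Y -> U) (g : Y -> Z) :
  (forall x y, 0 <= P x y) ->
  \sum_(x : X) \sum_(y : Y) P x y = 1 ->
  (forall x, 0 < \sum_(y : Y) P x y) ->
  (forall y, 0 < \sum_(x : X) P x y) ->
  exists C : R, exists N : nat, forall n : nat, (N <= n)%N ->
    `| Hchi P f g n - infS P f g n | <= C * ln (n%:R : R).
Proof.
move=> P_ge0 P_sum1 _ _; exists (2 * #|Z|)%:R, 2%N => n n_ge2.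
have Hchi_le := Hchi_le_infS f g n P_ge0 P_sum1.
have infS_le := infS_le_Hchi f g n P_ge0 P_sum1.
have ln_le := ln_size_ztypes_le R Z n_ge2.
by rewrite distrC ger0_norm ?subr_ge0 //; lra.
Qed.
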